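(* Let $G\sim\mathcal{G}(n,p)$ and let $m$ denote its (random) number of edges. Then the average complexity of best-first branch-and-bound with potentials for maximum independent set on $G$ satisfies $$\mathbb{T}(n,p)\le\sum_{i=0}^{n}\sum_{k=0}^{i}\binom{i}{k}(1-p)^{\binom{k}{2}}\cdot\mathbb{P}\left(m\ge\frac{n^2}{2(n-i+k)}-\frac{n}{2}\right).$$
   Context: $\mathcal{G}(n,p)$ is the binomial random graph on $n$ vertices in which each of the $\binom{n}{2}$ pairs of vertices is an edge with probability $p$, independently. The branch-and-bound algorithm processes the vertices in a fixed order $v_1,\dots,v_n$; a node $t$ at level $i$ of the binary search tree corresponds to a partial solution $P(t,i)\subseteq\{v_1,\dots,v_i\}$, its two children being $P(t,i)\cup\{v_{i+1}\}$ and $P(t,i)$. Each partial solution $S=P(t,i)$ has potential (evaluation) $u(S)=|S|+n-i$. Nodes whose partial solution is not an independent set are discarded; among the remaining unexplored nodes, the algorithm always expands one of largest potential (best-first rule); the first complete solution (level $n$) obtained is returned and all other branches are pruned. $\mathbb{T}(n,p)$ denotes the expected number of nodes handled by this algorithm when $G\sim\mathcal{G}(n,p)$. *)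

From HB Require Import structures.
From mathcomp Require Import all_boot all_order all_algebra.
Set Implicit Arguments. Unset Strict Implicit. Unset Printing Implicit Defensive.
Import Order.TTheory GRing.Theory Num.Theory.

(** Vertices v_1,...,v_n are the ordinals 0,...,n-1 of 'I_n (v_{j+1} = j).
    A (simple) graph on 'I_n is its edge set, a subset of the pairs (x,y)
    with x < y. *)
Definition gpairs (n : nat) : {set 'I_n * 'I_n} := [set e : 'I_n * 'I_n | (val e.1 < val e.2)%N].

Definition is_graph (n : nat) (G : {set 'I_n * 'I_n}) : bool := G \subset gpairs n.

Definition adj (n : nat) (G : {set 'I_n * 'I_n}) (x y : 'I_n) : bool :=
  ((x, y) \in G) || ((y, x) \in G).

Definition independent (n : nat) (G : {set 'I_n * 'I_n}) (S : {set 'I_n}) : bool :=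
  [forall x in S, forall y in S, (x != y) ==> ~~ adj G x y].

(** Nodes of the binary search tree: (level i, partial solution P(t,i)),
    with P(t,i) a subset of {v_1,...,v_i}. *)
Definition node (n : nat) := (nat * {set 'I_n})%type.

Definition potential (n : nat) (t : node n) : nat := #|t.2| + n - t.1.

Definition vnext (n : nat) (i : nat) : {set 'I_n} := [set v : 'I_n | val v == i].

Definition children (n : nat) (t : node n) : seq (node n) :=
  [:: (t.1.+1, t.2 :|: vnext n t.1); (t.1.+1, t.2)].

Definition best_first_rule (n : nat)
    (choose : {set 'I_n * 'I_n} -> seq (node n) -> node n) : Prop :=
  forall G s, s != [::] ->
    choose G s \in s /\ (forall t, t \in s -> potential t <= potential (choose G s)).

Fixpoint bb_run (n : nat) (choose : {set 'I_n * 'I_n} -> seq (node n) -> node n)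
    (G : {set 'I_n * 'I_n}) (fuel : nat) (open : seq (node n)) (count : nat) : nat :=
  match fuel with
  | 0 => count
  | f.+1 =>
    match open with
    | [::] => count
    | _ :: _ =>
      let t := choose G open in
      let open' := rem t open in
      if t.1 == n then count.+1
      else bb_run choose G f
             ([seq c <- children t | independent G c.2] ++ open') count.+1
    end
  end.

(** Number of nodes handled on graph G.  The fuel 2^(n+1) exceeds the number
    of nodes of the search tree, so it is never exhausted. *)
Definition nodes_handled (n : nat)
    (choose : {set 'I_n * 'I_n} -> seq (node n) -> node n)
    (G : {set 'I_n * 'I_n}) : nat :=
  bb_run choose G (2 ^ n.+1) [:: (0%N, set0)] 0.

Local Open Scope ring_scope.

Definition gnp_weight (R : realFieldType) (n : nat) (p : R)
    (G : {set 'I_n * 'I_n}) : R :=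
  p ^+ #|G| * (1 - p) ^+ ('C(n, 2) - #|G|).

Definition gnp_prob (R : realFieldType) (n : nat) (p : R)
    (A : {set 'I_n * 'I_n} -> bool) : R :=
  \sum_(G : {set 'I_n * 'I_n} | is_graph G && A G) gnp_weight p G.

Definition gnp_expect (R : realFieldType) (n : nat) (p : R)
    (X : {set 'I_n * 'I_n} -> R) : R :=
  \sum_(G : {set 'I_n * 'I_n} | is_graph G) gnp_weight p G * X G.

Definition T_avg (R : realFieldType) (n : nat) (p : R)
    (choose : {set 'I_n * 'I_n} -> seq (node n) -> node n) : R :=
  gnp_expect p (fun G => (nodes_handled choose G)%:R).

(** The event m >= n^2/(2(n-i+k)) - n/2, where m = #|G| is the number of
    edges; when n-i+k = 0 the threshold is +infinity (n >= 1), so the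
    event is empty. *)
Definition edge_event (R : realFieldType) (n i k : nat) (G : {set 'I_n * 'I_n}) : bool :=
  ((n - i + k)%N != 0%N) &&
  ((n%:R ^+ 2 / (2 * (n - i + k)%:R) - n%:R / 2 : R) <= (#|G|)%:R).

From HB Require Import structures.
From mathcomp Require Import all_boot all_order all_algebra.
From mathcomp Require Import zify ring.
Import Order.TTheory GRing.Theory Num.Theory.
Set Implicit Arguments. Unset Strict Implicit. Unset Printing Implicit Defensive.

(* Fix an independent set I of G.  The branch of the search tree leading to I
   always keeps an open node (i, I ∩ {v_1,...,v_i}), whose potential is at
   least |I|; hence the best-first rule only ever selects nodes of potential
   at least |I|.  Every node is generated once, by its parent, so the handled
   nodes are distinct pairs (i, S) with S ⊆ {v_1,...,v_i} independent and
   |S| + n - i >= |I|.  The greedy algorithm gives Turán's bound: some I has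
   n^2 <= |I| (2m + n), and then every such pair with |S| = k lies in the edge
   event m >= n^2/(2(n-i+k)) - n/2.  Finally the edge event is increasing and
   S independent means that the C(k,2) pairs inside S are non-edges, so by
   Harris's inequality, proved edge by edge, the probability of both is at most
   (1-p)^C(k,2) times that of the edge event. *)

Definition pairs_in n (A : {set 'I_n}) : {set 'I_n * 'I_n} :=
  [set e in gpairs n | (e.1 \in A) && (e.2 \in A)].

Lemma card_pairs_in n (A : {set 'I_n}) : #|pairs_in A| = 'C(#|A|, 2).
Proof.
rewrite -cards_draws -(@card_in_imset _ _ (fun e => [set e.1; e.2])).
  apply: eq_card => B; rewrite inE.
  apply/imsetP/andP => [[[x y]]|[BA /cards2P [x [y [xy defB]]]]].
    rewrite !inE /= => /and3P [lt_xy xA yA] ->.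
    rewrite subUset !sub1set xA yA cards2 eqSS eqb1 -val_eqE /=; split=> //.
    by rewrite ltn_eqF.
  have [lt_xy|lt_yx] : (val x < val y)%N \/ (val y < val x)%N.
    by move: xy; rewrite -val_eqE /=; lia.
  - exists (x, y) => //; move: BA; rewrite defB subUset !sub1set !inE /=.
    by rewrite lt_xy.
  - exists (y, x); last by rewrite defB setUC.
    by move: BA; rewrite defB subUset !sub1set !inE /= lt_yx => /andP [-> ->].
move=> [a b] [c d]; rewrite !inE /= => /and3P [lt_ab _ _] /and3P [lt_cd _ _].
move/setP => E; have := E a; have := E b; have := E c.
rewrite !inE !eqxx /= ?orbT -!(inj_eq (@ord_inj n)) => c_ab /esym b_cd /esym a_cd.
apply/eqP; rewrite xpair_eqE -!(inj_eq (@ord_inj n)); lia.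
Qed.

Lemma card_gpairs n : #|gpairs n| = 'C(n, 2).
Proof.
rewrite -[n in 'C(n, 2)]card_ord -cardsT -card_pairs_in.
by apply: eq_card => e; rewrite !inE !andbT.
Qed.

(** * Turán's bound via the greedy algorithm *)

(* One greedy step: a stable set of size [a] among the [k] vertices left after
   removing the closed neighbourhood (of size [s]) of a vertex of minimum degree
   is extended by that vertex; [X] and [Z] are the degree sums of the remaining
   and of all vertices.  AM-GM absorbs the cross term [2ks]. *)
Lemma greedy_step_arith (a k s X Z : nat) :
  (k ^ 2 <= a * (X + k))%N -> (X + s * s.-1 <= Z)%N -> (0 < s)%N ->
  ((k + s) ^ 2 <= a.+1 * (Z + (k + s)))%N.
Proof.
move=> ih le_XZ s_gt0.
suff cross : (2 * k * s <= a * s ^ 2 + X + k)%N by nia.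
have [a0|a_gt0] := posnP a.
  by move: ih; rewrite a0 mul0n leqn0 expn_eq0 => /andP [/eqP ->].
rewrite -(leq_pmul2l a_gt0).
have := leq_of_leqif (nat_Cauchy (a * s) k).
nia.
Qed.

Section GreedyStableSet.
Variables (T : finType) (r : rel T).
Hypotheses (r_sym : symmetric r) (r_irr : irreflexive r).

Definition stable (S : {set T}) : bool :=
  [forall x in S, forall y in S, (x != y) ==> ~~ r x y].

Definition deg (U : {set T}) (u : T) : nat := #|[set w in U | r u w]|.

Definition degsum (U : {set T}) : nat := \sum_(u in U) deg U u.

Lemma stableP (S : {set T}) :
  reflect {in S &, forall x y, x != y -> ~~ r x y} (stable S).
Proof.
apply: (iffP forall_inP) => [st x y xS yS|st x xS].
  by move/forall_inP/(_ y yS)/implyP: (st x xS).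
by apply/forall_inP => y yS; apply/implyP; apply: st.
Qed.

Lemma stableS (S S' : {set T}) : S \subset S' -> stable S' -> stable S.
Proof.
move=> /subsetP sub /stableP stS'; apply/stableP => x y xS yS.
exact: stS' (sub x xS) (sub y yS).
Qed.

Lemma stableU1 v (S : {set T}) :
  stable S -> {in S, forall y, ~~ r v y} -> stable (v |: S).
Proof.
move=> /stableP stS nvS; apply/stableP => x y.
rewrite !inE => /predU1P [->|xS] /predU1P [->|yS] neq.
- by rewrite eqxx in neq.
- exact: nvS.
- by rewrite r_sym nvS.
- exact: stS.
Qed.

Lemma deg_subset (U V : {set T}) u : U \subset V -> (deg U u <= deg V u)%N.
Proof.
move=> /subsetP UV; apply: subset_leq_card; apply/subsetP => w.
by rewrite !inE => /andP [/UV -> ->].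
Qed.

Lemma degsum_setD_le (U N : {set T}) :
  N \subset U -> (degsum (U :\: N) + \sum_(u in N) deg U u <= degsum U)%N.
Proof.
move=> NU; rewrite /degsum [X in (_ <= X)%N](big_setID N) (setIidPr NU) addnC.
by rewrite leq_add2l; apply: leq_sum => u _; apply/deg_subset/subsetDl.
Qed.

Lemma greedy_stable_set (U : {set T}) :
  exists I : {set T}, [/\ I \subset U, stable I &
    (#|U| ^ 2 <= #|I| * (degsum U + #|U|))%N].
Proof.
have [c] := ubnP #|U|; elim: c U => // c IH U; rewrite ltnS => card_U.
have [-> | [u0 u0U]] := set_0Vmem U.
  exists set0; split; rewrite ?sub0set ?cards0 //.
  by apply/stableP => x; rewrite inE.
have [v vU v_min] := arg_minnP (P := [in U]) (deg U) u0U.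
pose N := v |: [set w in U | r v w].
have vN : v \in N by rewrite setU11.
have card_N : #|N| = (deg U v).+1 by rewrite cardsU1 inE r_irr andbF.
have sub_NU : N \subset U.
  by apply/subsetP => w; rewrite !inE => /orP [/eqP ->|/andP []].
have card_UN : #|U| = (#|U :\: N| + #|N|)%N.
  by rewrite cardsD (setIidPr sub_NU) subnK // subset_leq_card.
have [|I [sub_I stI ih]] := IH (U :\: N); first by lia.
have vI : v \notin I by apply: contraL vN => /(subsetP sub_I); rewrite inE => /andP [].
exists (v |: I); split.
- by rewrite subUset sub1set vU (subset_trans sub_I) ?subsetDl.
- apply: stableU1 => // y /(subsetP sub_I).
  rewrite !inE negb_or => /andP [/andP [_ not_adj] yU].
  by apply: contraNN not_adj => ->; rewrite yU.
- rewrite cardsU1 vI card_UN; apply: greedy_step_arith ih _ _; last by rewrite card_N.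
  apply: leq_trans (degsum_setD_le sub_NU); rewrite leq_add2l {2}card_N succnK.
  by rewrite -sum_nat_const; apply: leq_sum => u /(subsetP sub_NU); apply: v_min.
Qed.

End GreedyStableSet.

Lemma sum_card_row (T : finType) (A : {set T * T}) :
  (\sum_(u : T) #|[set w | (u, w) \in A]|)%N = #|A|.
Proof.
under eq_bigr do rewrite -sum1dep_card.
by rewrite pair_big_dep -sum1_card; apply: eq_bigl => -[u w].
Qed.

Lemma degsum_adj n (G : {set 'I_n * 'I_n}) :
  (degsum (adj G) [set: 'I_n] <= 2 * #|G|)%N.
Proof.
pose swap (e : 'I_n * 'I_n) := (e.2, e.1).
have swap_inj : injective swap by move=> [? ?] [? ?] [-> ->].
rewrite mul2n -addnn -{1}(sum_card_row G) -[in X in (_ + X)%N](card_preimset G swap_inj).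
rewrite -(sum_card_row (swap @^-1: G)) -big_split /= /degsum.
under eq_bigl do rewrite in_setT.
apply: leq_sum => u _; rewrite /deg.
apply: leq_trans (leq_card_setU _ _); apply: subset_leq_card; apply/subsetP => w.
by rewrite !inE.
Qed.

Lemma exists_turan_independent n (G : {set 'I_n * 'I_n}) :
  is_graph G -> exists I, independent G I /\ (n ^ 2 <= #|I| * (2 * #|G| + n))%N.
Proof.
move=> graphG.
have adj_irr : irreflexive (adj G).
  move=> u; rewrite /adj orbb; apply/negP => /(subsetP graphG).
  by rewrite inE ltnn.
have [I [_ stI bound]] := greedy_stable_set (fun u w => orbC _ _) adj_irr [set: 'I_n].
exists I; split=> //; rewrite cardsT card_ord in bound.
by apply: leq_trans bound _; rewrite leq_mul2l leq_add2r degsum_adj orbT.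
Qed.

(** * The best-first search *)

Definition first_vertices n i : {set 'I_n} := [set v : 'I_n | (val v < i)%N].

Lemma card_first_vertices n i : (i <= n)%N -> #|first_vertices n i| = i.
Proof.
move=> le_in; have widen_inj : injective (widen_ord le_in).
  by move=> a b [] /ord_inj.
rewrite -[RHS](card_ord i) -(card_imset _ widen_inj).
apply: eq_card => v; rewrite inE; apply/idP/imsetP => [lt_vi|[j _ ->]] //=.
by exists (Ordinal lt_vi) => //; apply: val_inj.
Qed.

Section SearchTree.
Variable n : nat.

Lemma first_verticesS i : first_vertices n i.+1 = first_vertices n i :|: vnext n i.
Proof. by apply/setP => v; rewrite !inE ltnS leq_eqVlt orbC. Qed.

Lemma disjoint_first_vertices_vnext (S : {set 'I_n}) i :
  S \subset first_vertices n i -> [disjoint S & vnext n i].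
Proof.
move=> /subsetP sub; rewrite -setI_eq0; apply/eqP/setP => v; rewrite !inE.
by apply/negbTE/andP => -[/sub]; rewrite inE => lt_vi /eqP vi; rewrite vi ltnn in lt_vi.
Qed.

Definition parent (t : node n) : node n := (t.1.-1, t.2 :\: vnext n t.1.-1).

Lemma parent_children (t c : node n) :
  t.2 \subset first_vertices n t.1 -> c \in children t -> parent c = t.
Proof.
move: t => [i S] /= /disjoint_first_vertices_vnext disj; rewrite !inE /parent.
by case/pred2P => -> /=; congr (_, _); rewrite ?setDUl ?setDv ?setU0; apply/setDidPl.
Qed.

Lemma children_subset_first_vertices (t c : node n) :
  t.2 \subset first_vertices n t.1 -> c \in children t -> c.2 \subset first_vertices n c.1.
Proof.
move=> sub; rewrite !inE => /pred2P [] -> /=; rewrite first_verticesS.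
  exact: setSU.
exact: subset_trans sub (subsetUl _ _).
Qed.

Lemma uniq_children (t : node n) :
  (t.1 < n)%N -> t.2 \subset first_vertices n t.1 -> uniq (children t).
Proof.
move=> lt_tn /disjoint_first_vertices_vnext disj; rewrite /= andbT inE.
apply/eqP => -[] /setP /(_ (Ordinal lt_tn)); rewrite !inE eqxx orbT => /esym tS.
by move: (disjointFr disj tS); rewrite inE eqxx.
Qed.

End SearchTree.

Section BestFirstRun.
Variables (n : nat) (choose : {set 'I_n * 'I_n} -> seq (node n) -> node n).
Variables (G : {set 'I_n * 'I_n}) (I : {set 'I_n}).
Hypotheses (best : best_first_rule choose) (indI : independent G I).

Definition feasible (t : node n) : bool :=
  [&& (t.1 <= n)%N, t.2 \subset first_vertices n t.1 & independent G t.2].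

Definition promising (t : node n) : bool := feasible t && (#|I| <= potential t)%N.

Definition expand (t : node n) : seq (node n) :=
  [seq c <- children t | independent G c.2].

Definition path_node i : node n := (i, I :&: first_vertices n i).

Lemma bb_run_cons fuel o k : o != [::] ->
  bb_run choose G fuel.+1 o k =
  let t := choose G o in
  if t.1 == n then k.+1 else bb_run choose G fuel (expand t ++ rem t o) k.+1.
Proof. by case: o. Qed.

Lemma potential_path_node i : (i <= n)%N -> (#|I| <= potential (path_node i))%N.
Proof.
move=> le_in; rewrite /potential /= -(cardsID (first_vertices n i) I) -addnBA //.
have card_C : #|~: first_vertices n i| = (n - i)%N.
  rewrite -[n in (n - _)%N](card_ord n) -(cardsC (first_vertices n i)).
  by rewrite card_first_vertices // addKn.
by rewrite leq_add2l -card_C subset_leq_card // setDE subsetIr.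
Qed.

Lemma path_node_expand i : (i < n)%N -> path_node i.+1 \in expand (path_node i).
Proof.
move=> lt_in; rewrite mem_filter /=; apply/andP; split.
  by apply: stableS (subsetIl _ _) indI.
have vnext_i : vnext n i = [set Ordinal lt_in].
  by apply/setP => v; rewrite !inE -val_eqE.
rewrite /path_node /children /= first_verticesS setIUr vnext_i.
have [vI|vNI] := boolP (Ordinal lt_in \in I).
  by rewrite (setIidPr (_ : [set Ordinal lt_in] \subset I)) ?sub1set ?mem_head.
suff -> : I :&: [set Ordinal lt_in] = set0 by rewrite setU0 !inE eqxx orbT.
by rewrite disjoint_setI0 // disjoint_sym disjoints1.
Qed.

(* Invariant of a run with open list [o] and handled list [H]: the parent of a
   node is handled before the node is created, which makes all created nodes
   distinct, and the branch towards [I] always has an open node. *)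
Definition bb_inv (o H : seq (node n)) : Prop :=
  [/\ uniq (o ++ H), {in o ++ H, forall x, feasible x},
      {in o ++ H, forall x, (0 < x.1)%N -> parent x \in H},
      {in H, forall x, (#|I| <= potential x)%N} &
      exists2 i, (i <= n)%N & path_node i \in o].

Lemma bb_inv_choose o H : bb_inv o H ->
  let t := choose G o in [/\ t \in o, t \notin H & promising t].
Proof.
move=> [uniq_oH feas _ _ [i le_in path_i]] t.
have o_nil : o != [::] by apply: contraTneq path_i => ->.
have [t_o t_max] := best G o_nil.
have t_H : t \notin H.
  by move: uniq_oH; rewrite cat_uniq => /and3P [_ /hasPn /(_ t) /contraL -> //].
split=> //; rewrite /promising feas ?mem_cat ?t_o //.
exact: leq_trans (potential_path_node le_in) (t_max _ path_i).
Qed.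

Lemma bb_inv_step o H : bb_inv o H ->
  let t := choose G o in t.1 != n -> bb_inv (expand t ++ rem t o) (t :: H).
Proof.
move=> inv t t_n; have [t_o t_H /andP [feas_t pot_t]] := bb_inv_choose inv.
case: inv => uniq_oH feas par pot [i le_in path_i].
case/and3P: feas_t => le_tn sub_t _; have lt_tn : (t.1 < n)%N by rewrite ltn_neqAle t_n.
have perm_oH : perm_eq (rem t o ++ t :: H) (o ++ H).
  by rewrite -cat1s perm_catCA catA perm_cat2r perm_sym perm_to_rem.
have mem_oH := perm_mem perm_oH.
have expand_children c : c \in expand t -> c \in children t by rewrite mem_filter => /andP [].
have parent_expand c : c \in expand t -> parent c = t.
  by move/expand_children; apply: parent_children.
have fresh c : c \in expand t -> c \notin o ++ H.
  move=> ct; apply: contra t_H => /par; rewrite (parent_expand c ct).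
  by apply; move/expand_children: ct; rewrite !inE => /pred2P [] ->.
rewrite /bb_inv -catA; split.
- rewrite cat_uniq (perm_uniq perm_oH) uniq_oH andbT filter_uniq ?uniq_children //=.
  by apply/hasPn => x; rewrite mem_oH; apply: contraL; apply: fresh.
- move=> x; rewrite mem_cat mem_oH => /orP [xt|/feas //].
  rewrite /feasible (children_subset_first_vertices sub_t (expand_children x xt)).
  by move: xt; rewrite mem_filter !inE => /andP [-> /pred2P [] ->]; rewrite /= lt_tn.
- move=> x; rewrite mem_cat mem_oH => /orP [xt _|xoH /(par x xoH)].
    by rewrite parent_expand ?mem_head.
  by rewrite inE => ->; rewrite orbT.
- by move=> x; rewrite inE => /predU1P [->|/pot].
- have [ti|tNi] := eqVneq (path_node i) t.
    have lt_in : (i < n)%N by rewrite -ti in lt_tn.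
    by exists i.+1 => //; rewrite mem_cat -ti path_node_expand.
  have uniq_o : uniq o by move: uniq_oH; rewrite cat_uniq => /andP [].
  by exists i => //; rewrite mem_cat mem_rem_uniq // inE tNi path_i orbT.
Qed.

Definition promising_nodes : {set 'I_n.+1 * {set 'I_n}} :=
  [set y | promising (val y.1, y.2)].

Lemma size_promising_le (L : seq (node n)) :
  uniq L -> {in L, forall x, promising x} -> (size L <= #|promising_nodes|)%N.
Proof.
move=> uniq_L prom_L; have lvl x : x \in L -> (x.1 < n.+1)%N.
  by move/prom_L => /andP [/andP []].
pose code (x : node n) := (inord x.1 : 'I_n.+1, x.2).
rewrite -(size_map code) cardE; apply: uniq_leq_size.
  rewrite map_inj_in_uniq // => -[i S] [j S'] /lvl /= lt_i /lvl /= lt_j [eq_ij ->].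
  by rewrite -(inordK lt_i) -(inordK lt_j) eq_ij.
move=> y /mapP [x xL ->]; rewrite mem_enum inE /= inordK ?lvl //.
by rewrite -surjective_pairing prom_L.
Qed.

Lemma bb_inv_count o H : bb_inv o H -> (size (choose G o :: H) <= #|promising_nodes|)%N.
Proof.
move=> inv; have [_ t_H prom_t] := bb_inv_choose inv; case: inv => uniq_oH feas _ pot _.
apply: size_promising_le => [|x].
  by rewrite /= t_H; move: uniq_oH; rewrite cat_uniq => /and3P [].
rewrite inE => /predU1P [-> //|xH].
by rewrite /promising feas ?pot // mem_cat xH orbT.
Qed.

Lemma bb_run_bound fuel o H :
  bb_inv o H -> (bb_run choose G fuel o (size H) <= #|promising_nodes|)%N.
Proof.
elim: fuel o H => [|fuel IH] o H inv.
  exact: leq_trans (leqnSn _) (bb_inv_count inv).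
have [t_o _ _] := bb_inv_choose inv.
have o_nil : o != [::] by apply: contraTneq t_o => ->.
rewrite bb_run_cons //=; case: ifPn => [_|t_n]; first exact: bb_inv_count inv.
exact: IH _ (_ :: H) (bb_inv_step inv t_n).
Qed.

Lemma nodes_handled_bound : (nodes_handled choose G <= #|promising_nodes|)%N.
Proof.
apply: (@bb_run_bound _ _ [::]); split=> //.
- move=> x; rewrite inE => /eqP ->; rewrite /feasible /= sub0set.
  by apply: stableS (sub0set _) indI.
- by move=> x; rewrite inE => /eqP ->.
- by exists 0%N => //; rewrite /path_node (_ : first_vertices n 0 = set0) ?setI0 ?mem_head.
Qed.

End BestFirstRun.

(** * Edge probabilities in G(n,p) *)

Local Open Scope ring_scope.

Definition upward_closed n (B : pred {set 'I_n * 'I_n}) : Prop :=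
  forall G G' : {set 'I_n * 'I_n}, is_graph G' -> G \subset G' -> B G -> B G'.

Lemma ler_sum_subpred (R : numDomainType) (I : finType) (P Q : pred I) (F : I -> R) :
  (forall i, P i -> Q i) -> (forall i, Q i -> 0 <= F i) ->
  \sum_(i | P i) F i <= \sum_(i | Q i) F i.
Proof.
move=> PQ F_ge0; rewrite [X in X <= _]big_mkcond [X in _ <= X]big_mkcond.
apply: ler_sum => i _; case: ifP => [/PQ -> //|_].
by case: ifP => // /F_ge0.
Qed.

Section GnpProbability.
Variables (R : realFieldType) (n : nat) (p : R).
Hypotheses (p_ge0 : 0 <= p) (p_le1 : p <= 1).

Lemma is_graph_setU1 e (G : {set 'I_n * 'I_n}) :
  e \in gpairs n -> is_graph (e |: G) = is_graph G.
Proof. by move=> e_pair; rewrite /is_graph subUset sub1set e_pair. Qed.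

Lemma gnp_weight_ge0 (G : {set 'I_n * 'I_n}) : 0 <= gnp_weight p G.
Proof. by rewrite mulr_ge0 ?exprn_ge0 ?subr_ge0. Qed.

Lemma gnp_weight_setU1 (G : {set 'I_n * 'I_n}) e :
  e \in gpairs n -> is_graph G -> e \notin G ->
  p * gnp_weight p G = (1 - p) * gnp_weight p (e |: G).
Proof.
move=> e_pair graphG eNG.
have : (#|e |: G| <= 'C(n, 2))%N.
  by rewrite -card_gpairs subset_leq_card // -/(is_graph _) is_graph_setU1.
rewrite /gnp_weight cardsU1 eNG add1n => le_card.
by rewrite -(subnSK le_card) !exprS; ring.
Qed.

(* Adding [e] maps the graphs of [D] avoiding [e] injectively into those of [D]
   containing [e], multiplying the weight by p/(1-p). *)
Lemma gnp_prob_avoid_edge (D : pred {set 'I_n * 'I_n}) e :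
  e \in gpairs n ->
  (forall G, is_graph G -> e \notin G -> D G -> D (e |: G)) ->
  gnp_prob p (fun G => (e \notin G) && D G) <= (1 - p) * gnp_prob p D.
Proof.
move=> e_pair D_add.
set S1 := gnp_prob p _; set S2 := gnp_prob p (fun G => (e \in G) && D G).
have split_D : gnp_prob p D = S1 + S2.
  rewrite /gnp_prob (bigID (fun G : {set _} => e \notin G)) /=.
  by congr (_ + _); apply: eq_bigl => G; rewrite ?negbK andbAC andbA.
have shift : \sum_(G | is_graph G && ((e \notin G) && D G)) gnp_weight p (e |: G) <= S2.
  rewrite /S2 /gnp_prob.
  rewrite [X in _ <= X](reindex_onto (fun G => e |: G) (fun G => G :\ e)) /=; last first.
    by move=> G /andP [_ /andP [eG _]]; rewrite setD1K.
  apply: ler_sum_subpred => [G /andP [graphG /andP [eNG DG]]|G _]; last exact: gnp_weight_ge0.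
  by rewrite is_graph_setU1 // setU11 graphG D_add //= setU1K ?eqxx.
have pS1 : p * S1 <= (1 - p) * S2.
  rewrite /S1 /gnp_prob mulr_sumr (eq_bigr (fun G => (1 - p) * gnp_weight p (e |: G))).
    by rewrite -mulr_sumr ler_wpM2l ?subr_ge0.
  by move=> G /and3P [graphG eNG _]; apply: gnp_weight_setU1.
rewrite split_D -subr_ge0 (_ : _ - _ = (1 - p) * S2 - p * S1) ?subr_ge0 //.
by rewrite /S1 /S2; ring.
Qed.

(* A special case of Harris's inequality. *)
Lemma gnp_prob_avoid (B : pred {set 'I_n * 'I_n}) (s : seq ('I_n * 'I_n)) :
  upward_closed B -> uniq s -> {subset s <= gpairs n} ->
  gnp_prob p (fun G => all (fun e => e \notin G) s && B G) <= (1 - p) ^+ size s * gnp_prob p B.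
Proof.
move=> upB; elim: s => [|e s IH]; first by rewrite expr0 mul1r /gnp_prob /=.
move=> /= /andP [eNs uniq_s] sub_s.
have e_pair : e \in gpairs n by apply: sub_s; rewrite mem_head.
rewrite [X in X <= _](_ : _ = gnp_prob p (fun G => (e \notin G) &&
    (all (fun e => e \notin G) s && B G))); last by apply: eq_bigl => G; rewrite /= !andbA.
apply: le_trans (gnp_prob_avoid_edge e_pair _) _.
  move=> G graphG eNG /andP [sNG BG]; rewrite (upB G) ?subsetUr ?is_graph_setU1 //.
  rewrite andbT; apply/allP => x xs; rewrite !inE negb_or (allP sNG) // andbT.
  by apply: contraNneq eNs => <-.
rewrite exprS -mulrA ler_wpM2l ?subr_ge0 // IH // => x xs.
by apply: sub_s; rewrite inE xs orbT.
Qed.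

End GnpProbability.

Lemma gnp_prob_independent (R : realFieldType) n (p : R) (S : {set 'I_n})
    (B : pred {set 'I_n * 'I_n}) :
  0 <= p -> p <= 1 -> upward_closed B ->
  gnp_prob p (fun G => independent G S && B G) <= (1 - p) ^+ 'C(#|S|, 2) * gnp_prob p B.
Proof.
move=> p_ge0 p_le1 upB; rewrite -card_pairs_in cardE.
apply: le_trans (gnp_prob_avoid p_ge0 p_le1 upB (enum_uniq _) _) => [|e]; last first.
  by rewrite mem_enum inE => /andP [].
apply: ler_sum_subpred => [G /andP [-> /andP [indS ->]]|G _]; last exact: gnp_weight_ge0.
rewrite andbT; apply/allP => e; rewrite mem_enum !inE => /and3P [lt_e e1S e2S].
have neq_e : e.1 != e.2 by rewrite -(inj_eq (@ord_inj n)) neq_ltn lt_e.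
move/stableP: indS => /(_ _ _ e1S e2S neq_e).
by apply: contraNN => eG; rewrite /adj -surjective_pairing eG.
Qed.

Lemma edge_event_upward (R : realFieldType) n i k : upward_closed (@edge_event R n i k).
Proof.
move=> G G' _ sub /andP [K_neq0 le_m]; rewrite /edge_event K_neq0.
by apply: le_trans le_m _; rewrite ler_nat subset_leq_card.
Qed.

Lemma sum_subsets_card (R : nmodType) (T : finType) (A : {set T}) (f : nat -> R) :
  \sum_(S : {set T} | S \subset A) f #|S| = \sum_(k < #|A|.+1) f k *+ 'C(#|A|, k).
Proof.
pose size_of (S : {set T}) : 'I_#|A|.+1 := inord #|S|.
have size_ofK (S : {set T}) : S \subset A -> size_of S = #|S| :> nat.
  by move=> sub; rewrite inordK // ltnS subset_leq_card.
rewrite (partition_big size_of xpredT) //=; apply: eq_bigr => k _.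
rewrite (eq_bigr (fun _ => f k)) => [|S /andP [sub /eqP <-]]; last by rewrite size_ofK.
rewrite sumr_const -cards_draws; congr (_ *+ _); apply: eq_card => S.
rewrite !inE; apply: andb_id2l => sub.
by rewrite -(inj_eq val_inj) /= size_ofK.
Qed.

Lemma edge_event_of_potential (R : realFieldType) n i (G : {set 'I_n * 'I_n})
    (I S : {set 'I_n}) :
  (0 < n)%N -> (i <= n)%N -> (n ^ 2 <= #|I| * (2 * #|G| + n))%N ->
  (#|I| <= potential (i, S))%N -> @edge_event R n i #|S| G.
Proof.
rewrite /potential /= => n_gt0 le_in turan le_pot.
have {}turan : (n ^ 2 <= (n - i + #|S|) * (2 * #|G| + n))%N.
  by apply: leq_trans turan (leq_mul _ (leqnn _)); rewrite addnC addnBA.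
have K_gt0 : (0 < n - i + #|S|)%N.
  by rewrite lt0n; apply: contraTneq turan => ->; rewrite -ltnNge expn_gt0 n_gt0.
rewrite /edge_event -lt0n K_gt0 lerBlDr ler_pdivrMr ?mulr_gt0 ?ltr0n //.
rewrite (_ : (_ + _) * _ = (n - i + #|S|)%:R * (2 * #|G|%:R + n%:R)); last by field.
by rewrite -natrX -natrM -natrD -natrM ler_nat.
Qed.

Lemma nodes_handled_le_sum (R : realFieldType) n
    (choose : {set 'I_n * 'I_n} -> seq (node n) -> node n) (G : {set 'I_n * 'I_n}) :
  (0 < n)%N -> best_first_rule choose -> is_graph G ->
  (nodes_handled choose G <=
   \sum_(i < n.+1) \sum_(S : {set 'I_n} | S \subset first_vertices n i)
      (independent G S && @edge_event R n i #|S| G))%N.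
Proof.
move=> n_gt0 best graphG; have [I [indI turan]] := exists_turan_independent graphG.
apply: leq_trans (nodes_handled_bound best indI) _.
rewrite -sum1dep_card big_mkcond.
rewrite -(pair_big xpredT xpredT (fun i S => if promising G I (val i, S) then 1 else 0)%N) /=.
apply: leq_sum => i _; rewrite [X in (_ <= X)%N]big_mkcond /=; apply: leq_sum => S _.
case: ifP => // /andP [/and3P [le_in sub indS] pot].
by rewrite sub indS (edge_event_of_potential R n_gt0 le_in turan pot).
Qed.

Lemma T_avg_le_sum_prob (R : realFieldType) n (p : R)
    (choose : {set 'I_n * 'I_n} -> seq (node n) -> node n) :
  (0 < n)%N -> 0 <= p -> p <= 1 -> best_first_rule choose ->
  T_avg p choose <=
    \sum_(i < n.+1) \sum_(S : {set 'I_n} | S \subset first_vertices n i)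
      gnp_prob p (fun G => independent G S && @edge_event R n i #|S| G).
Proof.
move=> n_gt0 p_ge0 p_le1 best; rewrite /T_avg /gnp_expect.
apply: le_trans (_ : _ <= \sum_(G | is_graph G) gnp_weight p G *
   (\sum_(i < n.+1) \sum_(S : {set 'I_n} | S \subset first_vertices n i)
      (independent G S && @edge_event R n i #|S| G))%:R) _.
  apply: ler_sum => G graphG; rewrite ler_wpM2l ?gnp_weight_ge0 // ler_nat.
  exact: nodes_handled_le_sum.
under eq_bigr do rewrite natr_sum mulr_sumr; rewrite exchange_big /=.
apply: ler_sum => i _; under eq_bigr do rewrite natr_sum mulr_sumr.
rewrite exchange_big /=; apply: ler_sum => S _.
by rewrite /gnp_prob big_mkcondr /=; apply: ler_sum => G _; case: ifP; rewrite ?mulr1 ?mulr0.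
Qed.

Theorem theorem2 (R : realFieldType) (n : nat) (p : R)
    (choose : {set 'I_n * 'I_n} -> seq (node n) -> node n) :
  (0 < n)%N -> 0 <= p -> p <= 1 -> best_first_rule choose ->
  T_avg p choose <=
    \sum_(0 <= i < n.+1) \sum_(0 <= k < i.+1)
      'C(i, k)%:R * (1 - p) ^+ 'C(k, 2) * gnp_prob p (@edge_event R n i k).
Proof.
move=> n_gt0 p_ge0 p_le1 best.
apply: le_trans (T_avg_le_sum_prob n_gt0 p_ge0 p_le1 best) _.
rewrite big_mkord; apply: ler_sum => i _; have le_in : (i <= n)%N := ltn_ord i.
apply: le_trans (_ : _ <= \sum_(S : {set 'I_n} | S \subset first_vertices n i)
    (1 - p) ^+ 'C(#|S|, 2) * gnp_prob p (@edge_event R n i #|S|)) _.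
  apply: ler_sum => S _; apply: gnp_prob_independent => //; exact: edge_event_upward.
rewrite (sum_subsets_card _ (fun k => (1 - p) ^+ 'C(k, 2) * gnp_prob p (@edge_event R n i k))).
by rewrite card_first_vertices // big_mkord; apply: ler_sum => k _; rewrite -mulrA mulr_natl.
Qed.
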